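(* Assume the setting (S) below. Then $Te^*_0\cap J=\sum_{i=1}^dTg_i$.
   Context: Setting (S): $\mathbb{F}$ is a field, $d\ge0$, and $(\{\theta_i\}_{i=0}^d;\{\theta^*_i\}_{i=0}^d;\{\zeta_i\}_{i=0}^d)$ are scalars in $\mathbb{F}$ satisfying: (C1) $\theta_i\ne\theta_j$, $\theta^*_i\ne\theta^*_j$ for $i\ne j$; (C2) $\zeta_0=1$, $\zeta_d\ne0$, $\sum_{i=0}^d\eta_{d-i}(\theta_0)\eta^*_{d-i}(\theta^*_0)\zeta_i\ne0$, where $\eta_i(\lambda)=\prod_{j=0}^{i-1}(\lambda-\theta_{d-j})$, $\eta^*_i(\lambda)=\prod_{j=0}^{i-1}(\lambda-\theta^*_{d-j})$; (C3) $\frac{\theta_{i-2}-\theta_{i+1}}{\theta_{i-1}-\theta_i}$ and $\frac{\theta^*_{i-2}-\theta^*_{i+1}}{\theta^*_{i-1}-\theta^*_i}$ are equal and independent of $i$ for $2\le i\le d-1$. Let $\tau_i(\lambda)=\prod_{j=0}^{i-1}(\lambda-\theta_j)$. For any such data satisfying (C1),(C3), $T$ denotes the associative $\mathbb{F}$-algebra with $1$ generated by $a,e_0,\dots,e_d,a^*,e^*_0,\dots,e^*_d$ with relations $e_ie_j=\delta_{ij}e_i$, $e^*_ie^*_j=\delta_{ij}e^*_i$, $\sum_ie_i=\sum_ie^*_i=1$, $a=\sum_i\theta_ie_i$, $a^*=\sum_i\theta^*_ie^*_i$, $e^*_ia^ke^*_j=0$ and $e_i{a^*}^ke_j=0$ whenever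 $0\le i,j,k\le d$, $k<|i-j|$; $e^*_0Te^*_0$ is a commutative $\mathbb{F}$-algebra with identity $e^*_0$, and $\mu:\mathbb{F}[x_1,\dots,x_d]\to e^*_0Te^*_0$ is the surjective algebra homomorphism $x_i\mapsto e^*_0\tau_i(a)e^*_0$. It is assumed (the $\mu$-conjecture) that for every $d'\ge0$ and every data $\{\theta_i\},\{\theta^*_i\}$ of length $d'+1$ satisfying (C1),(C3), the corresponding $\mu$ is an isomorphism. For $1\le i\le d$ put $g_i=e^*_0\tau_i(a)e^*_0-\zeta_ie^*_0/((\theta^*_0-\theta^*_1)\cdots(\theta^*_0-\theta^*_i))$, and $J=T(1-e^*_0)+\sum_{i=1}^dTg_i$ (a left ideal of $T$). *)

From HB Require Import structures.
From mathcomp Require Import all_boot all_order all_algebra.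
From mathcomp Require Import mpoly.
Set Implicit Arguments. Unset Strict Implicit. Unset Printing Implicit Defensive.
Import Order.TTheory GRing.Theory.
Local Open Scope ring_scope.

Section Defs.
Variable F : fieldType.

Definition eta (th : nat -> F) (d i : nat) (l : F) : F :=
  \prod_(j < i) (l - th (d - j)%N).

Definition tau (A : algType F) (th : nat -> F) (i : nat) (x : A) : A :=
  \prod_(j < i) (x - (th j)%:A).

Definition cond_C1 (d : nat) (th ths : nat -> F) : Prop :=
  (forall i j, (i <= d)%N -> (j <= d)%N -> th i = th j -> i = j) /\
  (forall i j, (i <= d)%N -> (j <= d)%N -> ths i = ths j -> i = j).

Definition cond_C2 (d : nat) (th ths zeta : nat -> F) : Prop :=
  [/\ zeta 0%N = 1, zeta d != 0 &
      \sum_(i < d.+1) eta th d (d - i) (th 0%N) * eta ths d (d - i) (ths 0%N)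
                       * zeta i != 0].

Definition cond_C3 (d : nat) (th ths : nat -> F) : Prop :=
  exists beta : F, forall i, (2 <= i)%N -> (i <= d.-1)%N ->
    (th (i - 2)%N - th i.+1) / (th i.-1 - th i) = beta /\
    (ths (i - 2)%N - ths i.+1) / (ths i.-1 - ths i) = beta.

Definition T_rels (d : nat) (th ths : nat -> F) (B : algType F)
    (a : B) (e : nat -> B) (as_ : B) (es : nat -> B) : Prop :=
  (forall i j, (i <= d)%N -> (j <= d)%N ->
        e i * e j = (if i == j then e i else 0)) /\
  (forall i j, (i <= d)%N -> (j <= d)%N ->
        es i * es j = (if i == j then es i else 0)) /\
  \sum_(i < d.+1) e i = 1 /\ \sum_(i < d.+1) es i = 1 /\
  a = \sum_(i < d.+1) th i *: e i /\
  as_ = \sum_(i < d.+1) ths i *: es i /\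
  (forall i j k, (i <= d)%N -> (j <= d)%N -> (k <= d)%N ->
        (k < `|(i:int) - (j:int)|)%N -> es i * a ^+ k * es j = 0) /\
  (forall i j k, (i <= d)%N -> (j <= d)%N -> (k <= d)%N ->
        (k < `|(i:int) - (j:int)|)%N -> e i * as_ ^+ k * e j = 0).

Definition alg_hom (A B : algType F) (phi : A -> B) : Prop :=
  [/\ forall x y, phi (x + y) = phi x + phi y,
      forall (c : F) x, phi (c *: x) = c *: phi x,
      forall x y, phi (x * y) = phi x * phi y &
      phi 1 = 1].

(* (A, a, e, as_, es) is the algebra T presented by the generators and
   relations above: it satisfies the relations and is universal for them. *)
Definition is_T (d : nat) (th ths : nat -> F) (A : algType F)
    (a : A) (e : nat -> A) (as_ : A) (es : nat -> A) : Prop :=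
  T_rels d th ths a e as_ es /\
  forall (B : algType F) (b : B) (f : nat -> B) (bs : B) (fs : nat -> B),
    T_rels d th ths b f bs fs ->
    (exists phi : A -> B, alg_hom phi /\ phi a = b /\ phi as_ = bs /\
        (forall i, (i <= d)%N -> phi (e i) = f i /\ phi (es i) = fs i)) /\
    (forall phi psi : A -> B, alg_hom phi -> alg_hom psi ->
        phi a = psi a -> phi as_ = psi as_ ->
        (forall i, (i <= d)%N -> phi (e i) = psi (e i) /\ phi (es i) = psi (es i)) ->
        forall x, phi x = psi x).

(* mu : F[x_1..x_d] -> e*_0 T e*_0, x_i |-> e*_0 tau_i(a) e*_0; the variable
   'X_i (i : 'I_d) of {mpoly F[d]} stands for x_{i+1}; constants c |-> c e*_0. *)
Definition mu (d : nat) (th : nat -> F) (A : algType F) (a es0 : A)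
    (p : {mpoly F[d]}) : A :=
  \sum_(m <- msupp p)
     p@_m *: (es0 * \prod_(i < d) (es0 * tau th i.+1 a * es0) ^+ m i).

Definition mu_iso (d : nat) (th : nat -> F) (A : algType F) (a es0 : A) : Prop :=
  injective (mu th a es0 : {mpoly F[d]} -> A) /\
  forall t : A, exists p : {mpoly F[d]}, mu th a es0 p = es0 * t * es0.

Definition mu_conjecture : Prop :=
  forall (d' : nat) (th' ths' : nat -> F), cond_C1 d' th' ths' -> cond_C3 d' th' ths' ->
  forall (A' : algType F) (a' : A') (e' : nat -> A') (as' : A') (es' : nat -> A'),
    is_T d' th' ths' a' e' as' es' -> mu_iso d' th' a' (es' 0%N).

Definition g_el (th ths zeta : nat -> F) (A : algType F) (a es0 : A) (i : nat) : A :=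
  es0 * tau th i a * es0
  - (zeta i / \prod_(1 <= j < i.+1) (ths 0%N - ths j)) *: es0.

Definition in_sum_Tg (d : nat) (th ths zeta : nat -> F) (A : algType F) (a es0 : A)
    (x : A) : Prop :=
  exists t : nat -> A, x = \sum_(1 <= i < d.+1) t i * g_el th ths zeta a es0 i.

Definition in_J (d : nat) (th ths zeta : nat -> F) (A : algType F) (a es0 : A)
    (x : A) : Prop :=
  exists (t0 : A) (t : nat -> A),
    x = t0 * (1 - es0) + \sum_(1 <= i < d.+1) t i * g_el th ths zeta a es0 i.

End Defs.

From HB Require Import structures.
From mathcomp Require Import all_boot all_order all_algebra.
From mathcomp Require Import mpoly.
Set Implicit Arguments. Unset Strict Implicit. Unset Printing Implicit Defensive.
Import GRing.Theory.
Local Open Scope ring_scope.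

(* Each g_i lies in e*_0 T e*_0, so it is fixed by right multiplication by the
   idempotent e*_0; hence so is every element of sum_i T g_i.  Right
   multiplication by e*_0 kills T(1 - e*_0) and fixes T e*_0, so an element of
   T e*_0 written as t0 (1 - e*_0) + sum_i t_i g_i already equals sum_i t_i g_i. *)

Section IdempotentIdeal.
Variables (R : ringType) (e : R).
Hypothesis e_idem : e * e = e.

Lemma mulr_idem_fixed (t : R) : (t * e) * e = t * e.
Proof. by rewrite -mulrA e_idem. Qed.

Lemma left_ideal_idemP (x : R) : (exists t, x = t * e) <-> x * e = x.
Proof.
split => [[t ->] | xe]; first exact: mulr_idem_fixed.
by exists x.
Qed.

Lemma mulr_compl_idem (t : R) : t * (1 - e) * e = 0.
Proof. by rewrite -mulrA mulrBl mul1r e_idem subrr mulr0. Qed.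

Lemma sum_mulr_fixed (I : Type) (r : seq I) (P : pred I) (t g : I -> R) :
  (forall i, P i -> g i * e = g i) ->
  (\sum_(i <- r | P i) t i * g i) * e = \sum_(i <- r | P i) t i * g i.
Proof.
by move=> ge; rewrite mulr_suml; apply: eq_bigr => i Pi; rewrite -mulrA ge.
Qed.

End IdempotentIdeal.

Lemma g_el_mulr_idem (F : fieldType) (A : algType F) (th ths zeta : nat -> F)
    (a es0 : A) (i : nat) :
  es0 * es0 = es0 -> g_el th ths zeta a es0 i * es0 = g_el th ths zeta a es0 i.
Proof.
move=> idem; rewrite /g_el mulrBl -scalerAl idem.
by rewrite mulr_idem_fixed.
Qed.

Theorem lemma7p3 (F : fieldType) (d : nat) (th ths zeta : nat -> F)
  (HC1 : cond_C1 d th ths) (HC2 : cond_C2 d th ths zeta) (HC3 : cond_C3 d th ths)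
  (Hmu : mu_conjecture F)
  (A : algType F) (a : A) (e : nat -> A) (as_ : A) (es : nat -> A)
  (HT : is_T d th ths a e as_ es) :
  forall x : A,
    ((exists t : A, x = t * es 0%N) /\ in_J d th ths zeta a (es 0%N) x) <->
    in_sum_Tg d th ths zeta a (es 0%N) x.
Proof.
have idem : es 0%N * es 0%N = es 0%N by case: HT => [[_ [es_orth _]] _]; rewrite es_orth.
have sum_fixed t : (\sum_(1 <= i < d.+1) t i * g_el th ths zeta a (es 0%N) i) * es 0%N
    = \sum_(1 <= i < d.+1) t i * g_el th ths zeta a (es 0%N) i.
  by apply: sum_mulr_fixed => i _; apply: g_el_mulr_idem.
move=> x; rewrite left_ideal_idemP //; split.
- case=> [xe [t0 [t x_def]]]; exists t.
  by rewrite -xe x_def mulrDl mulr_compl_idem // sum_fixed add0r.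
- case=> t x_def; split; first by rewrite x_def sum_fixed.
  by exists 0, t; rewrite mul0r add0r.
Qed.
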